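(* For every cardinal $\kappa$ there is a cardinal $\lambda$ such that $\lambda\rightarrow(\lambda)_\kappa^{\mathrm{AFP}}$. In fact, $\lambda=\max\{\omega,(2^\kappa)^+\}$ suffices.
   Context: For a group $G$, an ordinal $\mu$ and a $\mu$-sequence $(g_\alpha\mid\alpha<\mu)$ of elements of $G$, its set of adjacent finite products is $\mathrm{AFP}(g_\alpha\mid\alpha<\mu)=\{g_\alpha g_{\alpha+1}\cdots g_{\alpha+n}\mid \alpha<\mu,\ n<\omega\}$ (all indices lying below $\mu$). For a group $G$, an ordinal $\mu$ and a cardinal $\kappa$, $G\rightarrow(\mu)_\kappa^{\mathrm{AFP}}$ means: for every colouring $c:G\to\kappa$ there is an injective $\mu$-sequence $(g_\alpha\mid\alpha<\mu)$ of elements of $G$ such that $\mathrm{AFP}(g_\alpha\mid\alpha<\mu)$ is monochromatic for $c$. For a cardinal $\lambda$, $\lambda\rightarrow(\mu)_\kappa^{\mathrm{AFP}}$ means that $G\rightarrow(\mu)_\kappa^{\mathrm{AFP}}$ holds for every group $G$ with $|G|=\lambda$. *)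

(* plain type theory; cardinals are represented by types,
   ordinals by well-ordered types. *)
From Stdlib Require Import Arith.

Set Implicit Arguments.

Definition inj {A B : Type} (f : A -> B) : Prop :=
  forall x y, f x = f y -> x = y.

Definition card_le (A B : Type) : Prop := exists f : A -> B, inj f.

Definition card_eq (A B : Type) : Prop :=
  exists (f : A -> B) (g : B -> A),
    (forall x, g (f x) = x) /\ (forall y, f (g y) = y).

Definition finite_type (A : Type) : Prop :=
  exists (n : nat) (f : A -> nat), inj f /\ forall x, f x < n.

Record IsGroup (G : Type) (mul : G -> G -> G) (one : G) (inv : G -> G) : Prop := {
  grp_assoc : forall x y z, mul x (mul y z) = mul (mul x y) z;
  grp_mul1g : forall x, mul one x = x;
  grp_mulVg : forall x, mul (inv x) x = one
}.

Record IsWellOrder (L : Type) (lt : L -> L -> Prop) : Prop := {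
  wo_irrefl : forall a, ~ lt a a;
  wo_trans : forall a b c, lt a b -> lt b c -> lt a c;
  wo_total : forall a b, lt a b \/ a = b \/ lt b a;
  wo_wf : well_founded lt
}.

(* (L, lt) is the initial ordinal of the cardinal  max{omega, (2^|K|)^+},
   i.e. the least infinite cardinal strictly above 2^|K|:
   L is infinite, |L| is not <= 2^|K|, and every proper initial segment
   is finite or of size <= 2^|K|. *)
Definition IsLambda (K L : Type) (lt : L -> L -> Prop) : Prop :=
  IsWellOrder lt /\
  ~ finite_type L /\
  ~ card_le L (K -> bool) /\
  (forall a : L, finite_type {b : L | lt b a} \/ card_le {b : L | lt b a} (K -> bool)).

Definition IsSucc (L : Type) (lt : L -> L -> Prop) (a b : L) : Prop :=
  lt a b /\ forall c, lt a c -> c = b \/ lt b c.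

(* AFP lt mul g a n x : x = g_a g_(a+1) ... g_(a+n) *)
Inductive AFP (L G : Type) (lt : L -> L -> Prop) (mul : G -> G -> G) (g : L -> G)
  : L -> nat -> G -> Prop :=
| AFP0 : forall a, AFP lt mul g a 0 (g a)
| AFPS : forall a b n x, IsSucc lt a b -> AFP lt mul g b n x ->
         AFP lt mul g a (S n) (mul (g a) x).

(* |L| -> (ordertype of (L,lt))^AFP_|K| : every group of cardinality |L|,
   every colouring by K admits an injective (L,lt)-indexed sequence whose
   set of adjacent finite products is monochromatic. *)
Definition ArrowAFP (K L : Type) (lt : L -> L -> Prop) : Prop :=
  forall (G : Type) (mul : G -> G -> G) (one : G) (inv : G -> G),
    IsGroup mul one inv -> card_eq G L ->
    forall c : G -> K,
      exists g : L -> G, inj g /\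
        exists i : K, forall (a : L) (n : nat) (x : G), AFP lt mul g a n x -> c x = i.

(* Let lambda be the least infinite cardinal above 2^kappa.  A set of size below
   lambda is finite or of size at most 2^kappa, and lambda -> (omega)^2_kappa holds:
   by Ramsey's theorem when kappa is finite, and otherwise by the Erdos-Rado tree: if
   every node had only finitely many tree-predecessors of each colour, each node would
   be determined by a subset of kappa, contradicting lambda > 2^kappa.

   Fix a group G of size lambda and a colouring c.  For every small U, a transfinite
   recursion yields a lambda-sequence (y_a) avoiding the fewer than lambda products
   y_p y_q^-1 y_r and y_p u (u in U) formed from earlier terms; hence its quotients
   y_a^-1 y_b (a < b) are pairwise distinct and lie outside U.  Colouring the pair
   {a, b} by c (y_a^-1 y_b) and taking a homogeneous omega-sequence gives a block:
   a sequence (h_m) whose quotients h_m^-1 h_m' (m < m') all have one colour i.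
   One colour i admits blocks avoiding every small U.  Cutting lambda into
   omega-blocks d, d + 1, d + 2, ..., choose for each d a block of colour i that
   avoids all terms defined before d, and set g_(d+m) = h_m^-1 h_(m+1).  Then g is
   injective, and each adjacent product telescopes to some h_m^-1 h_m' of colour i. *)

From mathcomp Require Import ssreflect ssrbool ssrfun eqtype seq boolp.
From mathcomp Require wochoice.
From Stdlib Require Import Arith Lia Inverse_Image.

Set Implicit Arguments.
Unset Strict Implicit.

Lemma proj1_sig_inj {A} {P : A -> Prop} (u v : {x | P x}) :
  proj1_sig u = proj1_sig v -> u = v.
Proof. by case: u v => x px [y py] /= exy; apply: eq_exist. Qed.

Definition inj_on {A B} (P : A -> Prop) (f : A -> B) : Prop :=
  forall x y, P x -> P y -> f x = f y -> x = y.

Definition infinite {A} (P : A -> Prop) : Prop := ~ finite_type {x | P x}.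

(** * Comparing cardinalities *)

Lemma card_le_refl A : card_le A A.
Proof. by exists id. Qed.

Lemma card_le_trans A B C : card_le A B -> card_le B C -> card_le A C.
Proof. by move=> [f injf] [g injg]; exists (g \o f) => x y /injg /injf. Qed.

Lemma card_le_surj A B (h : B -> A) : (forall a, exists b, h b = a) -> card_le A B.
Proof. by move=> /choice [s hs]; exists s => x y sxy; rewrite -(hs x) -(hs y) sxy. Qed.

Lemma card_le_sig_surj {A B} (P : A -> Prop) (h : B -> A) :
  (forall x, P x -> exists b, h b = x) -> card_le {x | P x} B.
Proof.
move=> hP.
have /choice [s hs] : forall u : {x | P x}, exists b, h b = proj1_sig u by case=> x px; apply: hP.
by exists s => u v suv; apply: proj1_sig_inj; rewrite -hs -(hs v) suv.
Qed.

Lemma card_le_inj_on {A B} (P : A -> Prop) (f : A -> B) :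
  inj_on P f -> card_le {x | P x} B.
Proof.
move=> injf; exists (fun u => f (proj1_sig u)) => [[x px] [y py]] /= fxy.
by apply: proj1_sig_inj; apply: injf.
Qed.

Lemma inj_on_of_card_le {A B} (P : A -> Prop) (b0 : B) :
  card_le {x | P x} B -> exists f : A -> B, inj_on P f.
Proof.
move=> [g injg]; exists (fun x => if pselect (P x) is left px then g (exist _ x px) else b0).
move=> x y px py; do 2!case: pselect => // ?.
by move=> /injg /(congr1 (@proj1_sig _ _)).
Qed.

Lemma card_le_subset {A} (P Q : A -> Prop) :
  (forall x, P x -> Q x) -> card_le {x | P x} {x | Q x}.
Proof.
move=> PQ; apply: (card_le_sig_surj (h := @proj1_sig _ _)) => x px.
by exists (exist Q x (PQ x px)).
Qed.

Lemma card_le_sig {A} (P : A -> Prop) : card_le {x | P x} A.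
Proof. exact: (card_le_inj_on (f := id)). Qed.

Lemma card_le_sig_true A : card_le A {x : A | True}.
Proof. by exists (fun x => exist _ x I) => x y /(congr1 (@proj1_sig _ _)). Qed.

Lemma card_le_prod A A' B B' : card_le A A' -> card_le B B' -> card_le (A * B) (A' * B').
Proof.
by move=> [f injf] [g injg]; exists (fun p => (f p.1, g p.2)) => [[a b] [c d]] [/injf-> /injg->].
Qed.

Lemma card_le_sum A A' B B' : card_le A A' -> card_le B B' -> card_le (A + B) (A' + B').
Proof.
move=> [f injf] [g injg].
exists (fun s => match s with inl a => inl (f a) | inr b => inr (g b) end).
by move=> [a|b] [c|d] // [] => [/injf|/injg] ->.
Qed.

Lemma card_le_image {A B} (P : A -> Prop) (f : A -> B) :
  card_le {y | exists x, P x /\ y = f x} {x | P x}.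
Proof.
apply: (card_le_sig_surj (h := fun u => f (proj1_sig u))) => _ [x [px ->]].
by exists (exist P x px).
Qed.

Lemma card_le_union {A} (P Q : A -> Prop) :
  card_le {x | P x \/ Q x} ({x | P x} + {x | Q x}).
Proof.
pose h (s : {x | P x} + {x | Q x}) := match s with inl u => proj1_sig u | inr v => proj1_sig v end.
apply: (card_le_sig_surj (h := h)).
by move=> x [px|qx]; [exists (inl (exist P x px)) | exists (inr (exist Q x qx))].
Qed.

Lemma card_le_sig_prod {A B} (P : A -> Prop) (Q : B -> Prop) :
  card_le {z : A * B | P z.1 /\ Q z.2} ({x | P x} * {y | Q y}).
Proof.
apply: (card_le_sig_surj (h := fun uv => (proj1_sig uv.1, proj1_sig uv.2))) => [[x y] [px qy]].
by exists (exist P x px, exist Q y qy).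
Qed.

Lemma card_le_sigma {I X} (F : I -> Type) :
  (forall i, card_le (F i) X) -> card_le {i : I & F i} (I * X).
Proof.
move=> le_FX; pose f i := proj1_sig (cid (le_FX i)).
exists (fun u => (projT1 u, f (projT1 u) (projT2 u))) => [[i u] [j v]] /= [eij]; subst j.
by move=> /(proj2_sig (cid (le_FX i))) ->.
Qed.

Lemma card_le_sum_square {A} (a0 a1 : A) : a0 <> a1 -> card_le (A + A) (A * A).
Proof.
move=> a01; exists (fun s => match s with inl x => (x, a0) | inr x => (x, a1) end).
by move=> [x|x] [y|y] [-> //] /esym.
Qed.

Lemma card_le_pow A B : card_le A B -> card_le (A -> bool) (B -> bool).
Proof.
move=> [f injf]; exists (fun p b => `[< exists a, f a = b /\ p a >]) => p q epq.
apply: funext => a; have /(congr1 (fun P => P (f a))) := epq.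
have img (r : A -> bool) : `[< exists a', f a' = f a /\ r a' >] = r a.
  by apply: asbool_equiv_eqP; first exact: idP; split=> [[a' [/injf-> //]]|ra]; exists a.
by rewrite !img.
Qed.

Lemma card_le_pred_bool A : card_le (A -> Prop) (A -> bool).
Proof.
exists (fun P a => `[< P a >]) => P Q ePQ; apply: funext => a; apply: propext.
exact: asbool_eq_equiv (congr1 (fun f => f a) ePQ).
Qed.

Lemma card_le_pow_sum A B : card_le ((A -> bool) * (B -> bool)) (A + B -> bool).
Proof.
exists (fun pq s => match s with inl a => pq.1 a | inr b => pq.2 b end) => [[p q] [p' q']] e.
by congr pair; apply: funext => x;
  [apply: (congr1 (fun f => f (inl x)) e) | apply: (congr1 (fun f => f (inr x)) e)].
Qed.

Lemma card_le_singletons A : card_le A (A -> bool).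
Proof.
exists (fun a b => `[< a = b >]) => a b /(congr1 (fun f => f b)).
by rewrite (asboolT (erefl b)) => /asboolP.
Qed.

Lemma cantor A : ~ card_le (A -> bool) A.
Proof.
move=> [f injf].
pose D a := ~~ `[< exists p, f p = a /\ p a >].
case DfD: (D (f D)).
- by move: (DfD); rewrite {1}/D (asboolT (ex_intro _ D (conj erefl DfD))).
- move: (DfD); rewrite {1}/D => /negbFE /asboolP [p [/injf -> pfD]].
  by rewrite DfD in pfD.
Qed.

(** * Finite types *)

Lemma finite_le A B : card_le A B -> finite_type B -> finite_type A.
Proof.
move=> [f injf] [n [g [injg gn]]]; exists n, (g \o f).
by split=> [x y /injg /injf //|x]; exact: gn.
Qed.

Lemma finite_empty A : (A -> False) -> finite_type A.
Proof. by move=> nA; exists 0, (fun x => match nA x with end); split=> x; case: (nA x). Qed.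

Lemma finite_unit : finite_type unit.
Proof. by exists 1, (fun _ => 0); split=> [[] []|_] //; lia. Qed.

Lemma finite_sum A B : finite_type A -> finite_type B -> finite_type (A + B).
Proof.
move=> [n [f [injf fn]]] [m [g [injg gm]]].
exists (n + m), (fun s => match s with inl a => f a | inr b => n + g b end); split.
- move=> [a|b] [c|d] /= e.
  + by rewrite (injf _ _ e).
  + by have := fn a; lia.
  + by have := fn c; lia.
  + by rewrite (injg b d) //; lia.
- by move=> [a|b]; [have := fn a | have := gm b]; lia.
Qed.

Lemma finite_prod A B : finite_type A -> finite_type B -> finite_type (A * B).
Proof.
move=> [n [f [injf fn]]] [m [g [injg gm]]].
exists (n * m), (fun p => f p.1 * m + g p.2); split.
- move=> [a b] [c d] /= e; have := gm b; have := gm d => gdm gbm.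
  have efac : f a = f c by nia.
  by rewrite (injf _ _ efac) (injg b d); last nia.
- by move=> [a b] /=; have := fn a; have := gm b; nia.
Qed.

Lemma finite_option A : finite_type A -> finite_type (option A).
Proof.
move=> finA; apply: (finite_le (B := (A + unit)%type)); last exact: finite_sum finA finite_unit.
by exists (fun o => if o is Some a then inl a else inr tt) => [[a|] [b|]] // [->].
Qed.

Lemma finite_bounded I (m : I -> nat) : finite_type I -> exists M, forall i, m i < M.
Proof.
move=> [n [e [inje en]]].
suff [M HM] : exists M, forall i, e i < n -> m i < M by exists M => i; apply: HM.
elim: n {en} => [|n [M HM]]; first by exists 0; lia.
case: (EM (exists i, e i = n)) => [[i0 ei0]|nen].
- exists (M + m i0 + 1) => i ein; case: (Nat.eq_dec (e i) n) => [ein'|nein].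
  + by rewrite (inje i i0); [lia | rewrite ein' ei0].
  + by have := HM i; lia.
- exists M => i ein; apply: HM; case: (Nat.eq_dec (e i) n) => [ein'|]; last lia.
  by case: nen; exists i.
Qed.

Lemma nat_infinite : ~ finite_type nat.
Proof. by move=> /(finite_bounded id) [M /(_ M)]; lia. Qed.

Lemma finite_card_le_nat A : finite_type A -> card_le A nat.
Proof. by move=> [n [f [injf _]]]; exists f. Qed.

Lemma finite_lt n : finite_type {m | m < n}.
Proof. by exists n, (@proj1_sig _ _); split=> [u v /proj1_sig_inj|[]]. Qed.

Lemma finite_sigma {I} (F : I -> Type) :
  finite_type I -> (forall i, finite_type (F i)) -> finite_type {i : I & F i}.
Proof.
move=> finI finF; pose n i := proj1_sig (cid (finF i)).
have [M nM] := finite_bounded n finI.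
apply: finite_le (finite_prod finI (finite_lt M)); apply: card_le_sigma => i.
have [f [injf fn]] := proj2_sig (cid (finF i)); rewrite -/(n i) in fn.
exists (fun u => exist (fun k => k < M) (f u) (Nat.lt_trans _ _ _ (fn u) (nM i))).
by move=> u v /(congr1 (@proj1_sig _ _)) /injf.
Qed.

Lemma finite_union {A} (P Q : A -> Prop) :
  finite_type {x | P x} -> finite_type {x | Q x} -> finite_type {x | P x \/ Q x}.
Proof. by move=> finP finQ; apply: finite_le (card_le_union P Q) (finite_sum finP finQ). Qed.

Lemma finite_singleton {A} (a : A) : finite_type {x | x = a}.
Proof.
exists 1, (fun _ => 0); split=> [[x xa] [y ya] _|_]; last lia.
by apply: proj1_sig_inj; rewrite /= xa ya.
Qed.

Lemma infinite_mono {A} (P Q : A -> Prop) : (forall x, P x -> Q x) -> infinite P -> infinite Q.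
Proof. by move=> PQ infP finQ; apply: infP (finite_le (card_le_subset PQ) finQ). Qed.

Fixpoint bin (f : nat -> bool) (n : nat) : nat :=
  if n is S n then bin f n + (if f n then 2 ^ n else 0) else 0.

Lemma bin_lt f n : bin f n < 2 ^ n.
Proof. by elim: n => [|n IH] /=; [lia | case: (f n); lia]. Qed.

Lemma bin_inj f g n : bin f n = bin g n -> forall i, i < n -> f i = g i.
Proof.
elim: n => [|n IH] /= e i ilt; first lia.
have := bin_lt f n; have := bin_lt g n => ltg ltf.
have efg : f n = g n by move: e; case: (f n); case: (g n) => //=; lia.
case: (Nat.eq_dec i n) => [-> //|nein]; apply: IH; last lia.
by move: e; rewrite efg; case: (g n); lia.
Qed.

Lemma finite_pow K : finite_type K -> finite_type (K -> bool).
Proof.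
move=> [n [e [inje en]]].
exists (2 ^ n), (fun p => bin (fun i => `[< exists k, e k = i /\ p k >]) n); split; last first.
  by move=> p; apply: bin_lt.
move=> p q /bin_inj epq; apply: funext => k; have := epq (e k) (en k).
have img (r : K -> bool) : `[< exists k', e k' = e k /\ r k' >] = r k.
  by apply: asbool_equiv_eqP; first exact: idP; split=> [[k' [/inje-> //]]|rk]; exists k.
by rewrite !img.
Qed.

(** * Transfinite recursion and well-orders *)

Section WfRecursion.
Variables (W : Type) (R : W -> W -> Prop) (wfR : well_founded R).

Lemma wf_min (P : W -> Prop) : (exists x, P x) -> exists x, P x /\ forall y, P y -> ~ R y x.
Proof.
move=> [x px]; apply: contrapT => nomin; elim/(well_founded_ind wfR): x px => x IH px.
by apply: nomin; exists x; split=> // y py /IH; apply.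
Qed.

Definition graph_below {A} (f : W -> A) (w v : W) (a : A) : Prop := R v w /\ f v = a.

(* The choice at stage w sees the earlier values only through their graph below w,
   so no extensionality side condition is needed. *)
Lemma wf_rec_choice {A} (a0 : A) (Q : W -> (W -> A -> Prop) -> A -> Prop) :
  exists f : W -> A, forall w,
    (exists a, Q w (graph_below f w) a) -> Q w (graph_below f w) (f w).
Proof.
pose step w prev := if pselect (exists a, Q w prev a) is left e then proj1_sig (cid e) else a0.
pose f := Fix wfR (fun _ => A) (fun w rec => step w (fun v a => exists h : R v w, rec v h = a)).
have f_eq w : f w = step w (graph_below f w).
  rewrite /f Fix_eq => [|x g g' egg']; congr step; apply: funext => v; apply: funext => a.
  - by apply: propext; split=> [[h <-]|[h <-]]; [split | exists h].
  - by apply: propext; split=> -[h e]; exists h; rewrite -e egg'.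
exists f => w ex; rewrite [f w]f_eq /step.
by case: pselect => [e|/(_ ex) //]; apply: (proj2_sig (cid e)).
Qed.

End WfRecursion.

Lemma exists_well_order (T : Type) : exists lt : T -> T -> Prop, IsWellOrder lt.
Proof.
have [R woR] := wochoice.well_ordering_principle (classicType T).
have chR : wochoice.wo_chain R predT by apply: wochoice.withinW.
have totR x y : R x y || R y x by exact: (wochoice.wo_chainW chR).
have antiR x y : R x y -> R y x -> x = y.
  by move=> Rxy Ryx; apply: (wochoice.wo_chain_antisymmetric chR) => //; rewrite Rxy Ryx.
have minR (A : {pred {classic T}}) x :
    x \in A -> exists m, m \in A /\ forall y, y \in A -> R m y.
  by move=> Ax; have [|m [[Am minm] _]] := woR A; [exists x | exists m].
exists (fun x y => R x y /\ x <> y); split.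
- by move=> x [].
- move=> x y z [Rxy nxy] [Ryz nyz].
  (* The least of x, y and z can only be x. *)
  have [m [/[!inE] /or3P m3 minm]] :=
    minR [pred u : {classic T} | u \in ([:: x; y; z] : seq {classic T})] x (mem_head _ _).
  split; last by move=> exz; subst z; apply: nxy; apply: antiR.
  case: m3 => /eqP ?; subst m; rewrite ?minm ?inE ?eqxx ?orbT //.
  + by case: nxy; apply: antiR Rxy (minm _ _); rewrite !inE eqxx.
  + by case: nyz; apply: antiR Ryz (minm _ _); rewrite !inE eqxx orbT.
- move=> x y; case: (EM (x = y)) => [|nxy]; first by right; left.
  by case/orP: (totR x y) => ?; [left | right; right]; split=> // /esym.
- move=> x; apply: contrapT => nacc.
  have [m [/asboolP naccm minm]] := minR [pred u | `[< ~ Acc _ u >]] x (asboolT nacc).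
  apply: naccm; constructor => y [Rym nym]; apply: contrapT => naccy.
  by apply: nym; apply: antiR Rym (minm _ (asboolT naccy)).
Qed.

Lemma nat_well_order : IsWellOrder Peano.lt.
Proof.
split; [exact: Nat.lt_irrefl | exact: Nat.lt_trans | | exact: Nat.lt_wf_0].
by move=> a b; case: (Nat.lt_trichotomy a b); auto.
Qed.

Lemma infinite_chain {A J} (P0 : A -> Prop) (Next : A -> J -> A -> Prop) :
  infinite P0 ->
  (forall P, infinite P -> exists x j, P x /\ infinite (fun y => P y /\ Next x j y)) ->
  exists (e : nat -> A) (c : nat -> J),
    (forall n, P0 (e n)) /\ forall n m, n < m -> Next (e n) (c n) (e m).
Proof.
move=> infP0 step; pose Inf := {P : A -> Prop | infinite P}.
have /choice [next nextP] : forall s : Inf, exists t : (A * J) * Inf, proj1_sig s t.1.1 /\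
    forall y, proj1_sig t.2 y -> proj1_sig s y /\ Next t.1.1 t.1.2 y.
  move=> [P infP]; have [x [j [Px infQ]]] := step P infP.
  by exists ((x, j), exist _ _ infQ).
pose s n := Nat.iter n (fun s => (next s).2) (exist _ P0 infP0 : Inf).
have s_sub n k y : proj1_sig (s (k + n)) y -> proj1_sig (s n) y.
  by elim: k y => [//|k IH] y yS; apply: IH; exact: ((nextP (s (k + n))).2 y yS).1.
exists (fun n => (next (s n)).1.1), (fun n => (next (s n)).1.2); split.
- move=> n; apply: (s_sub 0 n); rewrite Nat.add_0_r; exact: (nextP (s n)).1.
- move=> n m nm; have em : proj1_sig (s (m - S n + S n)) (next (s m)).1.1.
    by rewrite Nat.sub_add //; exact: (nextP (s m)).1.
  exact: ((nextP (s n)).2 _ (s_sub _ _ _ em)).2.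
Qed.

(* Hilbert's hotel along a copy of nat. *)
Lemma card_le_option_of_nat A : card_le nat A -> card_le (option A) A.
Proof.
move=> [e inje].
pose shift (a : A) :=
  if pselect (exists n, e n = a) is left h then e (S (proj1_sig (cid h))) else a.
exists (fun o => if o is Some a then shift a else e 0).
have shift_img a : (exists n, e n = a) -> exists n, shift a = e (S n).
  by rewrite /shift; case: pselect => // h _; exists (proj1_sig (cid h)).
have shift_out a : ~ (exists n, e n = a) -> shift a = a.
  by rewrite /shift; case: pselect.
have shift_inj a b : shift a = shift b -> a = b.
  case: (EM (exists n, e n = a)) => [ha|na]; case: (EM (exists n, e n = b)) => [hb|nb].
  - rewrite /shift; case: pselect => // {}ha; case: pselect => // {}hb /inje [].
    by case: (cid ha) => n /= <-; case: (cid hb) => m /= <- ->.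
  - by have [n ->] := shift_img a ha; rewrite shift_out // => en; case: nb; exists (S n).
  - by have [n ->] := shift_img b hb; rewrite shift_out // => en; case: na; exists (S n).
  - by rewrite !shift_out.
have shift_ne0 a : shift a <> e 0.
  case: (EM (exists n, e n = a)) => [/shift_img [n -> /inje] //|na].
  by rewrite shift_out // => a0; apply: na; exists 0.
by move=> [a|] [b|] //= => [/shift_inj -> | /shift_ne0 | /esym /shift_ne0].
Qed.

Lemma card_le_greedy {W X} (R : W -> W -> Prop) (P : W -> Prop) :
  well_founded R -> (forall a b, R a b \/ a = b \/ R b a) ->
  (forall w, P w -> ~ card_le X {v | P v /\ R v w}) -> card_le {w | P w} X.
Proof.
move=> wfR totR few.
case: (EM (inhabited X)) => [[x0]|nX]; last first.
  have noP w : ~ P w.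
    move=> Pw; apply: (few w Pw); exists (fun x => match nX (inhabits x) with end).
    by move=> x; case: (nX (inhabits x)).
  exists (fun u => match noP _ (proj2_sig u) with end) => [[w Pw]].
  by case: (noP w Pw).
pose fresh (w : W) (prev : W -> X -> Prop) (x : X) := forall v y, P v -> prev v y -> y <> x.
have [f fP] := wf_rec_choice wfR x0 fresh.
have f_fresh w v : P w -> P v -> R v w -> f v <> f w.
  move=> Pw Pv Rvw; have [x fx] : exists x, fresh w (graph_below R f w) x.
    apply: contrapT => nfresh; apply: (few w Pw).
    apply: (card_le_surj (h := fun u : {v | P v /\ R v w} => f (proj1_sig u))) => x.
    apply: contrapT => nhit; apply: nfresh; exists x => v' y Pv' [Rv'w <-] fv'x.
    by apply: nhit; exists (exist _ v' (conj Pv' Rv'w)).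
  exact: (fP w (ex_intro _ x fx) v (f v) Pv (conj Rvw erefl)).
apply: (card_le_inj_on (f := f)) => x y Px Py fxy.
by case: (totR x y) => [/(f_fresh y x Py Px)|[//|/(f_fresh x y Px Py)]]; rewrite fxy.
Qed.

Section WellOrder.
Variables (L : Type) (lt : L -> L -> Prop) (wo : IsWellOrder lt).

Lemma lt_irrefl a : ~ lt a a.
Proof. exact: wo_irrefl wo a. Qed.

Lemma lt_trans a b c : lt a b -> lt b c -> lt a c.
Proof. exact: wo_trans wo a b c. Qed.

Lemma lt_asym a b : lt a b -> ~ lt b a.
Proof. by move=> ab /(lt_trans ab) /lt_irrefl. Qed.

Lemma wo_min (P : L -> Prop) :
  (exists x, P x) -> exists x, P x /\ forall y, P y -> x = y \/ lt x y.
Proof.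
move=> /(wf_min (wo_wf wo)) [x [Px minx]]; exists x; split=> // y Py.
by case: (wo_total wo x y) => [|[|/(minx y Py)]]; auto.
Qed.

Lemma infinite_above_min (P : L -> Prop) :
  infinite P -> exists x, P x /\ infinite (fun y => P y /\ lt x y).
Proof.
move=> infP; have [|x [Px minx]] := @wo_min P.
  apply: contrapT => nP; apply: infP; apply: finite_empty => -[x Px].
  by apply: nP; exists x.
exists x; split=> // finQ; apply: infP.
apply: finite_le (finite_union finQ (finite_singleton x)).
by apply: card_le_subset => y Py; case: (minx y Py) => [->|]; [right | left].
Qed.

Lemma increasing_seq (P : L -> Prop) : infinite P ->
  exists e : nat -> L, (forall n, P (e n)) /\ forall n m, n < m -> lt (e n) (e m).
Proof.
move=> infP.
have [|e [_ [Pe eup]]] := infinite_chain (J := unit) (Next := fun x _ y => lt x y) infP.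
  by move=> Q /infinite_above_min [x [Qx infQ]]; exists x, tt.
by exists e.
Qed.

Lemma increasing_inj (e : nat -> L) : (forall n m, n < m -> lt (e n) (e m)) -> inj e.
Proof.
move=> eup n m enm.
by case: (Nat.lt_trichotomy n m) => [/eup|[//|/eup]]; rewrite enm => /lt_irrefl.
Qed.

Lemma card_le_nat_infinite (P : L -> Prop) : infinite P -> card_le nat {x | P x}.
Proof.
move=> /increasing_seq [e [Pe /increasing_inj inje]].
by exists (fun n => exist P (e n) (Pe n)) => n m /(congr1 (@proj1_sig _ _)) /inje.
Qed.

Definition seg (w : L) : Type := {v | lt v w}.

Lemma seg_le v w : lt v w -> card_le (seg v) (seg w).
Proof. by move=> vw; apply: card_le_subset => x xv; apply: lt_trans xv vw. Qed.

Lemma seg_initial_limit w m :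
  infinite (fun v => lt v w) -> (forall v, lt v w -> ~ card_le (seg w) (seg v)) ->
  lt m w -> exists v, lt m v /\ lt v w.
Proof.
move=> infw initw mw; apply: contrapT => nsucc.
have le_opt : card_le (seg w) (option (seg m)).
  apply: (card_le_sig_surj (h := fun o => if o is Some u then proj1_sig u else m)) => u uw.
  case: (wo_total wo u m) => [um|[->|mu]]; first by exists (Some (exist _ u um)).
  - by exists None.
  - by case: nsucc; exists u.
case: (EM (finite_type (seg m))) => [finm|infm].
- exact: infw (finite_le le_opt (finite_option finm)).
- apply: (initw m mw); apply: card_le_trans le_opt _.
  exact: card_le_option_of_nat (card_le_nat_infinite infm).
Qed.

Definition pmax (p : L * L) : L := if pselect (lt p.1 p.2) then p.2 else p.1.

Lemma pmax_ge p : (p.1 = pmax p \/ lt p.1 (pmax p)) /\ (p.2 = pmax p \/ lt p.2 (pmax p)).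
Proof.
rewrite /pmax; case: pselect => /= [lt12|nlt12]; first by split; [right | left].
split; first by left.
by case: (wo_total wo p.1 p.2) => [/nlt12 //|[e12|]]; [left | right].
Qed.

Lemma pmax_lt p w : lt p.1 w -> lt p.2 w -> lt (pmax p) w.
Proof. by rewrite /pmax; case: pselect. Qed.

(* Goedel's ordering of pairs: the predecessors of a pair lie in the square of its maximum. *)
Definition max_lex (p q : L * L) : Prop :=
  lt (pmax p) (pmax q) \/ (pmax p = pmax q /\ (lt p.1 q.1 \/ (p.1 = q.1 /\ lt p.2 q.2))).

Lemma max_lex_wf : well_founded max_lex.
Proof.
suff acc m a b : pmax (a, b) = m -> Acc max_lex (a, b) by move=> [a b]; exact: acc.
elim/(well_founded_ind (wo_wf wo)): m a b => m IHm a.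
elim/(well_founded_ind (wo_wf wo)): a => a IHa b.
elim/(well_founded_ind (wo_wf wo)): b => b IHb ab_m.
constructor => [[a' b']] [lt_m|[eq_m [lt_a|[/= ea lt_b]]]].
- by apply: (IHm (pmax (a', b'))) => //; rewrite -ab_m.
- by apply: (IHa a' lt_a b'); rewrite eq_m.
- by subst a'; apply: (IHb b' lt_b); rewrite eq_m.
Qed.

Lemma max_lex_total p q : max_lex p q \/ p = q \/ max_lex q p.
Proof.
case: p q => [a b] [c d]; rewrite /max_lex /=.
case: (wo_total wo (pmax (a, b)) (pmax (c, d))) => [|[eab|]];
  [by left; left | | by right; right; left].
case: (wo_total wo a c) => [ac|[eac|ca]].
- by left; right; split=> //; left.
- subst c; case: (wo_total wo b d) => [bd|[ebd|db]]; first by left; right; split=> //; right.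
  + by subst d; right; left.
  + by right; right; right; split=> //; right.
- by right; right; right; split=> //; left.
Qed.

(* Either seg w has the size of a smaller segment, or every pair below w has fewer than
   |seg w| predecessors for max_lex, and the greedy injection applies. *)
Lemma seg_square_le w : infinite (fun v => lt v w) -> card_le (seg w * seg w) (seg w).
Proof.
elim/(well_founded_ind (wo_wf wo)): w => w IH infw.
case: (EM (exists v, lt v w /\ card_le (seg w) (seg v))) => [[v [vw le_wv]]|initw].
  have infv : infinite (fun u => lt u v) by move=> finv; apply: infw (finite_le le_wv finv).
  apply: card_le_trans (card_le_prod le_wv le_wv) _.
  exact: card_le_trans (IH v vw infv) (seg_le vw).
have {}initw v : lt v w -> ~ card_le (seg w) (seg v) by move=> vw le_wv; apply: initw; exists v.
pose sq (p : L * L) := lt p.1 w /\ lt p.2 w.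
apply: (card_le_trans (B := {p | sq p})).
  exists (fun uv => exist sq (proj1_sig uv.1, proj1_sig uv.2)
                           (conj (proj2_sig uv.1) (proj2_sig uv.2))).
  move=> [[x xw] [y yw]] [[x' x'w] [y' y'w]] /(congr1 (@proj1_sig _ _)) /= [exx' eyy'].
  by subst x' y'; congr pair; apply: proj1_sig_inj.
apply: (card_le_greedy max_lex_wf max_lex_total) => p [p1w p2w] le_wp.
have [v [mv vw]] := seg_initial_limit infw initw (pmax_lt p1w p2w).
have le_pv : card_le {q | sq q /\ max_lex q p} (seg v * seg v).
  apply: card_le_trans (card_le_sig_prod (fun x => lt x v) (fun x => lt x v)).
  apply: card_le_subset.
  move=> q [_ qp]; have qv : lt (pmax q) v by case: qp => [qp|[-> _]] //; exact: lt_trans qp mv.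
  have below x : x = pmax q \/ lt x (pmax q) -> lt x v by case=> [->|xq] //; exact: lt_trans xq qv.
  by have [q1 q2] := pmax_ge q; split; apply: below.
case: (EM (finite_type (seg v))) => [finv|infv].
- exact: infw (finite_le (card_le_trans le_wp le_pv) (finite_prod finv finv)).
- exact: initw v vw (card_le_trans le_wp (card_le_trans le_pv (IH v vw infv))).
Qed.

End WellOrder.

Definition lt_top {T} (lt : T -> T -> Prop) (a b : option T) : Prop :=
  match a, b with Some x, Some y => lt x y | Some _, None => True | _, _ => False end.

Lemma lt_top_wo {T} (lt : T -> T -> Prop) : IsWellOrder lt -> IsWellOrder (lt_top lt).
Proof.
move=> wo; split.
- by move=> [a|] //=; apply: (wo_irrefl wo).
- by move=> [a|] [b|] [c|] //=; apply: (wo_trans wo).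
- move=> [a|] [b|] /=; [ | by left | by right; right | by right; left].
  by case: (wo_total wo a b) => [|[->|]]; [left | right; left | right; right].
- have accS a : Acc (lt_top lt) (Some a).
    elim/(well_founded_ind (wo_wf wo)): a => a IH.
    by constructor => -[b|] /= ba; [apply: IH | case: ba].
  by move=> [a|]; [apply: accS | constructor => -[b|] /= ba; [apply: accS | case: ba]].
Qed.

Lemma card_le_seg_top {T} (lt : T -> T -> Prop) :
  card_le T (seg (lt_top lt) None) /\ card_le (seg (lt_top lt) None) T.
Proof.
split; first by exists (fun x => exist _ (Some x) I) => x y /(congr1 (@proj1_sig _ _)) [].
by apply: (card_le_sig_surj (h := Some)) => [[x|]] //; exists x.
Qed.

(** * Infinite types *)

Section InfiniteType.
Variables (K : Type) (infK : ~ finite_type K).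

Lemma card_le_nat_infinite_type : card_le nat K.
Proof.
have [lt wo] := exists_well_order K.
apply: card_le_trans (card_le_sig (fun _ : K => True)); apply: (card_le_nat_infinite wo).
by move=> finT; apply: infK (finite_le (card_le_sig_true K) finT).
Qed.

Lemma card_le_square : card_le (K * K) K.
Proof.
have [lt wo] := exists_well_order K.
have [le_Kseg le_segK] := card_le_seg_top lt.
apply: card_le_trans (card_le_prod le_Kseg le_Kseg) _.
apply: card_le_trans (seg_square_le (lt_top_wo wo) _) le_segK.
by move=> fin; apply: infK (finite_le le_Kseg fin).
Qed.

Lemma exists_two : exists k0 k1 : K, k0 <> k1.
Proof. by have [e inje] := card_le_nat_infinite_type; exists (e 0), (e 1) => /inje. Qed.

Lemma card_le_pow_square : card_le ((K -> bool) * (K -> bool)) (K -> bool).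
Proof.
have [k0 [k1 k01]] := exists_two.
apply: card_le_trans (card_le_pow_sum K K) (card_le_pow _).
exact: card_le_trans (card_le_sum_square k01) card_le_square.
Qed.

Lemma card_le_pow_double : card_le ((K -> bool) + (K -> bool)) (K -> bool).
Proof.
have [k0 _] := exists_two.
have neq : (fun _ : K => true) <> (fun _ => false) by move=> /(congr1 (fun f => f k0)).
exact: card_le_trans (card_le_sum_square neq) card_le_pow_square.
Qed.

Lemma card_le_nat_pow : card_le nat (K -> bool).
Proof. exact: card_le_trans card_le_nat_infinite_type (card_le_singletons K). Qed.

End InfiniteType.

Lemma card_le_fibers {A K} (P : A -> Prop) (f : A -> K) :
  card_le {x | P x} {k : K & {x | P x /\ f x = k}}.
Proof.
apply: (card_le_sig_surj (h := fun u => proj1_sig (projT2 u))) => x Px.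
by exists (existT _ (f x) (exist _ x (conj Px erefl))).
Qed.

Lemma infinite_pigeonhole {A K} (P : A -> Prop) (f : A -> K) :
  finite_type K -> infinite P -> exists k, infinite (fun x => P x /\ f x = k).
Proof.
move=> finK infP; apply: contrapT => /forallNP finfib; apply: infP.
apply: finite_le (card_le_fibers P f) (finite_sigma finK _) => k.
exact: contrapT (finfib k).
Qed.

Lemma card_le_finite_fibers {A K} (P : A -> Prop) (f : A -> K) : ~ finite_type K ->
  (forall k, finite_type {x | P x /\ f x = k}) -> card_le {x | P x} K.
Proof.
move=> infK finfib; apply: card_le_trans (card_le_fibers P f) _.
apply: card_le_trans (card_le_sigma (X := nat) _) _ => [k|].
  exact: finite_card_le_nat.
apply: card_le_trans (card_le_square infK).
exact: card_le_prod (card_le_refl K) (card_le_nat_infinite_type infK).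
Qed.

(** * Sets of size below lambda *)

(* The sets of size below lambda, when lambda is the least infinite cardinal above 2^K. *)
Definition small (K : Type) {A} (P : A -> Prop) : Prop :=
  finite_type {x | P x} \/ card_le {x | P x} (K -> bool).

Section Small.
Variable K : Type.

Lemma small_le {A B} (P : A -> Prop) (Q : B -> Prop) :
  card_le {x | P x} {y | Q y} -> small K Q -> small K P.
Proof.
by move=> le_PQ [finQ|le_Q]; [left; apply: finite_le finQ | right; apply: card_le_trans le_Q].
Qed.

Lemma small_subset {A} (P Q : A -> Prop) : (forall x, P x -> Q x) -> small K Q -> small K P.
Proof. by move=> PQ; apply: small_le; apply: card_le_subset. Qed.

Lemma small_finite_type {A} (P : A -> Prop) : finite_type K -> small K P -> finite_type {x | P x}.
Proof. by move=> finK [//|le_P]; apply: finite_le le_P (finite_pow finK). Qed.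

Lemma small_infinite_type {A} (P : A -> Prop) :
  ~ finite_type K -> small K P -> card_le {x | P x} (K -> bool).
Proof.
move=> infK [finP|//].
exact: card_le_trans (finite_card_le_nat finP) (card_le_nat_pow infK).
Qed.

Lemma small_union {A} (P Q : A -> Prop) :
  small K P -> small K Q -> small K (fun x => P x \/ Q x).
Proof.
move=> sP sQ; case: (EM (finite_type K)) => [finK|infK].
  by left; apply: finite_union; apply: small_finite_type.
right; apply: card_le_trans (card_le_union P Q) _.
apply: card_le_trans (card_le_pow_double infK).
exact: card_le_sum (small_infinite_type infK sP) (small_infinite_type infK sQ).
Qed.

Lemma small_prod {A B} (P : A -> Prop) (Q : B -> Prop) :
  small K P -> small K Q -> small K (fun z : A * B => P z.1 /\ Q z.2).
Proof.
move=> sP sQ; case: (EM (finite_type K)) => [finK|infK].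
  by left; apply: finite_le (card_le_sig_prod _ _) _; apply: finite_prod; apply: small_finite_type.
right; apply: card_le_trans (card_le_sig_prod _ _) _.
apply: card_le_trans (card_le_pow_square infK).
exact: card_le_prod (small_infinite_type infK sP) (small_infinite_type infK sQ).
Qed.

Lemma small_image {A B} (P : A -> Prop) (f : A -> B) :
  small K P -> small K (fun y => exists x, P x /\ y = f x).
Proof. exact/small_le/card_le_image. Qed.

Lemma small_bigunion {A} (P : K -> A -> Prop) :
  (forall i, small K (P i)) -> small K (fun x => exists i, P i x).
Proof.
move=> sP; have le_sigma : card_le {x | exists i, P i x} {i : K & {x | P i x}}.
  apply: (card_le_sig_surj (h := fun u => proj1_sig (projT2 u))) => x [i Pix].
  by exists (existT _ i (exist _ x Pix)).
case: (EM (finite_type K)) => [finK|infK].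
  by left; apply: finite_le le_sigma (finite_sigma finK _) => i; apply: small_finite_type.
right; apply: card_le_trans le_sigma (card_le_trans (card_le_sigma _) _).
  by move=> i; apply: small_infinite_type.
apply: card_le_trans (card_le_pow_square infK).
exact: card_le_prod (card_le_singletons K) (card_le_refl _).
Qed.

End Small.

(** * The partition relation lambda -> (omega)^2_kappa *)

Section Partition.
Variables (K L : Type) (lt : L -> L -> Prop) (wo : IsWellOrder lt) (F : L -> L -> K).

Definition homogeneous_seq (j : K) (e : nat -> L) : Prop :=
  forall n m, n < m -> lt (e n) (e m) /\ F (e n) (e m) = j.

Lemma ramsey_omega : finite_type K -> ~ finite_type L -> exists j e, homogeneous_seq j e.
Proof.
move=> finK infL.
have infT : infinite (fun _ : L => True) by move=> /(finite_le (card_le_sig_true L)).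
have [|e [c [_ ec]]] := infinite_chain (Next := fun x j y => lt x y /\ F x y = j) infT.
  move=> P /(infinite_above_min wo) [x [Px /(infinite_pigeonhole (F x) finK) [j infj]]].
  by exists x, j; split=> //; apply: infinite_mono infj => y [[]].
have infN : infinite (fun _ : nat => True).
  by move=> /(finite_le (card_le_sig_true nat)) /nat_infinite.
have [k /(increasing_seq nat_well_order) [s [sk sup]]] := infinite_pigeonhole c finK infN.
exists k, (fun n => e (s n)) => n m /sup /ec.
by rewrite (sk n).2.
Qed.

Section CanonicalTree.
Variable T : L -> L -> Prop.
(* T a b: b lies below a in the Erdos-Rado tree of F. *)
Hypothesis T_eq : forall a b, T a b <-> lt b a /\ forall z, T b z -> F z b = F z a.

Lemma tree_lt a b : T a b -> lt b a.
Proof. by move=> /T_eq []. Qed.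

Lemma tree_colour_eq a b z : T a b -> T b z -> F z b = F z a.
Proof. by move=> /T_eq [_]; apply. Qed.

Lemma tree_trans a b z : T a b -> T b z -> T a z.
Proof.
elim/(well_founded_ind (wo_wf wo)): z a b => z IH a b Tab Tbz.
apply/T_eq; split=> [|w Tzw].
  exact: (lt_trans wo (tree_lt Tbz) (tree_lt Tab)).
rewrite (tree_colour_eq Tbz Tzw).
exact: tree_colour_eq Tab (IH w (tree_lt Tzw) b z Tbz Tzw).
Qed.

Lemma tree_below a b : T a b -> forall w, T b w <-> T a w /\ lt w b.
Proof.
move=> Tab w; split=> [Tbw|]; first by split; [apply: tree_trans Tab Tbw | apply: tree_lt].
elim/(well_founded_ind (wo_wf wo)): w => w IH [Taw wb].
apply/T_eq; split=> // v Twv; have Tav := tree_trans Taw Twv.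
rewrite (tree_colour_eq Taw Twv) (tree_colour_eq Tab (IH v (tree_lt Twv) _)) //.
by split=> //; apply: (lt_trans wo (tree_lt Twv) wb).
Qed.

Lemma tree_homogeneous a z z' : T a z -> T a z' -> lt z z' -> F z z' = F z a.
Proof. by move=> Taz Taz' zz'; apply: (tree_colour_eq Taz'); apply/(tree_below Taz'). Qed.

Lemma tree_ext a a' :
  (forall z, T a z <-> T a' z) -> (forall z, T a z -> F z a = F z a') -> a = a'.
Proof.
move=> eT eF; case: (wo_total wo a a') => [aa'|[//|a'a]].
- have : T a' a by apply/T_eq; split=> // z /eF.
  by move=> /eT /tree_lt /(lt_irrefl wo).
- have : T a a' by apply/T_eq; split=> // z Ta'z; rewrite eF //; apply/eT.
  by move=> /eT /tree_lt /(lt_irrefl wo).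
Qed.

Variable io : L -> L -> K.
Hypothesis io_inj : forall a, inj_on (T a) (io a).

(* The tree below a up to isomorphism, with the colours of its nodes towards a;
   nodes are named through io a. *)
Definition tree_code (a : L) (t : (bool * K) * K) : Prop :=
  match t with
  | ((true, k), k') => exists z z', T a z /\ T a z' /\ io a z = k /\ io a z' = k' /\ lt z z'
  | ((false, k), j) => exists z, T a z /\ io a z = k /\ F z a = j
  end.

Lemma tree_code_point a a' z : tree_code a = tree_code a' -> T a z ->
  exists z', T a' z' /\ io a' z' = io a z /\ F z' a' = F z a.
Proof.
move=> /(congr1 (fun C => C ((false, io a z), F z a))) /= ec Taz.
by rewrite -ec; exists z.
Qed.

Lemma tree_code_pair a a' z z' : tree_code a = tree_code a' -> T a z -> T a z' -> lt z z' ->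
  exists u u', T a' u /\ T a' u' /\ io a' u = io a z /\ io a' u' = io a z' /\ lt u u'.
Proof.
move=> /(congr1 (fun C => C ((true, io a z), io a z'))) /= ec Taz Taz' zz'.
by rewrite -ec; exists z, z'.
Qed.

Lemma tree_code_match a a' {z z'} : tree_code a = tree_code a' ->
  T a z -> T a' z' -> io a z = io a' z' -> z = z'.
Proof.
move=> ecode; elim/(well_founded_ind (wo_wf wo)): z z' => z IH z' Taz Ta'z' ezz'.
have below w : T z w -> T a' w /\ io a' w = io a w /\ F w a' = F w a.
  move=> Tzw; have Taw := tree_trans Taz Tzw.
  have [w' [Ta'w' [ew' Fw']]] := tree_code_point ecode Taw.
  by have eww' := IH w (tree_lt Tzw) w' Taw Ta'w' (esym ew'); subst w'.
have sub w : T z w -> T z' w.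
  move=> Tzw; have [Ta'w [ew _]] := below w Tzw.
  have [u [u' [Ta'u [Ta'u' [eu [eu' uu']]]]]] :=
    tree_code_pair ecode (tree_trans Taz Tzw) Taz (tree_lt Tzw).
  have euw : u = w by apply: (io_inj Ta'u Ta'w); rewrite eu ew.
  have eu'z' : u' = z' by apply: (io_inj Ta'u' Ta'z'); rewrite eu' ezz'.
  by subst u u'; apply/(tree_below Ta'z').
apply: tree_ext => [w|w Tzw].
- split=> [|Tz'w]; first exact: sub.
  have Ta'w := tree_trans Ta'z' Tz'w.
  have [w0 [Taw0 [ew0 _]]] := tree_code_point (esym ecode) Ta'w.
  have [u [u' [Tau [Tau' [eu [eu' uu']]]]]] :=
    tree_code_pair (esym ecode) Ta'w Ta'z' (tree_lt Tz'w).
  have euw0 : u = w0 by apply: (io_inj Tau Taw0); rewrite eu ew0.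
  have eu'z : u' = z by apply: (io_inj Tau' Taz); rewrite eu' ezz'.
  subst u u'; have Tzw0 : T z w0 by apply/(tree_below Taz).
  have [Ta'w0 [e _]] := below w0 Tzw0.
  suff -> : w = w0 by [].
  by apply: (io_inj Ta'w Ta'w0); rewrite e ew0.
- have [_ [_ Fw]] := below w Tzw.
  by rewrite (tree_colour_eq Taz Tzw) (tree_colour_eq Ta'z' (sub w Tzw)) Fw.
Qed.

Lemma tree_code_inj : inj tree_code.
Proof.
move=> a a' ecode; apply: tree_ext => [z|z Taz].
- split=> [Taz|Ta'z].
  + have [z' [Ta'z' [e _]]] := tree_code_point ecode Taz.
    by rewrite (tree_code_match ecode Taz Ta'z' (esym e)).
  + have [z0 [Taz0 [e _]]] := tree_code_point (esym ecode) Ta'z.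
    by rewrite -(tree_code_match ecode Taz0 Ta'z e).
- have [z' [Ta'z' [e Fz']]] := tree_code_point ecode Taz.
  by rewrite -Fz' (tree_code_match ecode Taz Ta'z' (esym e)).
Qed.

End CanonicalTree.

Lemma exists_canonical_tree : exists T : L -> L -> Prop,
  forall a b, T a b <-> lt b a /\ forall z, T b z -> F z b = F z a.
Proof.
pose node a (prev : L -> (L -> Prop) -> Prop) (S : L -> Prop) :=
  S = fun b => lt b a /\ forall S', prev b S' -> forall z, S' z -> F z b = F z a.
have [T TP] := wf_rec_choice (wo_wf wo) (fun _ => False) node.
exists T => a b; rewrite (TP a (ex_intro _ _ erefl)).
split=> -[ba Tb]; split=> //.
- by move=> z; apply: (Tb (T b)).
- by move=> S' [_ <-]; apply: Tb.
Qed.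

Lemma erdos_rado_omega :
  ~ finite_type K -> ~ card_le L (K -> bool) -> exists j e, homogeneous_seq j e.
Proof.
move=> infK bigL; have [T T_eq] := exists_canonical_tree.
have [a [j infH]] : exists a j, infinite (fun z => T a z /\ F z a = j).
  apply: contrapT => nfib; apply: bigL.
  have finfib a j : finite_type {z | T a z /\ F z a = j}.
    by apply: contrapT => inf; apply: nfib; exists a, j.
  have [k0 [k1 k01]] := exists_two infK.
  have /choice [io io_inj] : forall a, exists f : L -> K, inj_on (T a) f.
    move=> b; apply: (inj_on_of_card_le k0).
    exact: card_le_finite_fibers (T b) (fun z => F z b) infK (finfib b).
  have le_bool : card_le bool K.
    exists (fun b : bool => if b then k0 else k1) => x y.
    by case: x; case: y => //= e; case: k01.
  have le_code : card_le ((bool * K) * K) K.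
    apply: card_le_trans (card_le_prod _ (card_le_refl K)) (card_le_square infK).
    exact: card_le_trans (card_le_prod le_bool (card_le_refl K)) (card_le_square infK).
  apply: card_le_trans (ex_intro _ _ (tree_code_inj T_eq io_inj)) _.
  exact: card_le_trans (card_le_pred_bool _) (card_le_pow le_code).
have [e [He eup]] := increasing_seq wo infH.
exists j, e => n m nm; split; first exact: eup.
have [Tan Fn] := He n; have [Tam _] := He m.
by rewrite (tree_homogeneous T_eq Tan Tam (eup n m nm)).
Qed.

Lemma partition_omega :
  ~ finite_type L -> ~ card_le L (K -> bool) -> exists j e, homogeneous_seq j e.
Proof.
by move=> infL bigL; case: (EM (finite_type K)) => [/ramsey_omega|/erdos_rado_omega]; apply.
Qed.

End Partition.

(** * Decomposing a well-order into blocks of type omega *)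

Inductive nth_succ {L} (lt : L -> L -> Prop) (d : L) : nat -> L -> Prop :=
| nth_succ0 : nth_succ lt d 0 d
| nth_succS n a b : nth_succ lt d n a -> IsSucc lt a b -> nth_succ lt d (S n) b.

(* This includes the least element. *)
Definition no_pred {L} (lt : L -> L -> Prop) (d : L) : Prop := ~ exists p, IsSucc lt p d.

Section Successors.
Variables (L : Type) (lt : L -> L -> Prop) (wo : IsWellOrder lt).

Lemma succ_between a b c : IsSucc lt a b -> lt a c -> lt c b -> False.
Proof.
move=> [_ succb] ac cb; case: (succb c ac) => [ecb|]; last exact: (lt_asym wo cb).
by rewrite ecb in cb; apply: (lt_irrefl wo cb).
Qed.

Lemma succ_uniq a b b' : IsSucc lt a b -> IsSucc lt a b' -> b = b'.
Proof.
move=> succb succb'; case: (wo_total wo b b') => [bb'|[//|b'b]]; exfalso.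
- exact: (succ_between succb' succb.1 bb').
- exact: (succ_between succb succb'.1 b'b).
Qed.

Lemma pred_uniq a a' b : IsSucc lt a b -> IsSucc lt a' b -> a = a'.
Proof.
move=> succa succa'; case: (wo_total wo a a') => [aa'|[//|a'a]]; exfalso.
- exact: (succ_between succa aa' succa'.1).
- exact: (succ_between succa' a'a succa.1).
Qed.

Lemma nth_succ_exists a : exists d n, no_pred lt d /\ nth_succ lt d n a.
Proof.
elim/(well_founded_ind (wo_wf wo)): a => a IH.
case: (EM (exists p, IsSucc lt p a)) => [[p succp]|nopred].
- have [d [n [nod dnp]]] := IH p succp.1.
  by exists d, (S n); split=> //; apply: nth_succS dnp succp.
- by exists a, 0; split=> //; apply: nth_succ0.
Qed.

Lemma nth_succ_le d n a : nth_succ lt d n a -> d = a \/ lt d a.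
Proof.
elim=> [|m x b _ [<-|dx] [xb _]]; [by left | by right | by right; apply: (lt_trans wo dx xb)].
Qed.

Lemma nth_succ_fun d n a a' : nth_succ lt d n a -> nth_succ lt d n a' -> a = a'.
Proof.
move=> dna; elim: dna a' => [|m x b _ IH succb] a' dna';
  inversion dna' as [|m' x' b' dnx' succb']; subst => //.
by apply: succ_uniq succb _; rewrite (IH _ dnx').
Qed.

Lemma nth_succ_uniq d d' n n' a : no_pred lt d -> no_pred lt d' ->
  nth_succ lt d n a -> nth_succ lt d' n' a -> d = d' /\ n = n'.
Proof.
move=> nod nod' dna; elim: dna n' => [|m x b _ IH succb] n' d'n'a;
  inversion d'n'a as [|m' x' b' d'x' succb']; subst.
- by [].
- by case: nod; exists x'.
- by case: nod'; exists x.
- by have exx' := pred_uniq succb succb'; subst x'; have [-> ->] := IH _ d'x'.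
Qed.

Lemma nth_succ_below d n a w : nth_succ lt d n a -> lt d w -> no_pred lt w -> lt a w.
Proof.
move=> dna dw nopw; elim: dna => [//|m x b _ xw [xb succb]].
by case: (succb w xw) => [ebw|//]; case: nopw; exists x; rewrite ebw.
Qed.

End Successors.

(** * Monochromatic adjacent products *)

Section Groups.
Variables (G : Type) (mul : G -> G -> G) (one : G) (inv : G -> G) (grp : IsGroup mul one inv).

Lemma mulgV x : mul x (inv x) = one.
Proof.
rewrite -[mul x (inv x)](grp_mul1g grp) -{1}(grp_mulVg grp (inv x)) -(grp_assoc grp).
by rewrite (grp_assoc grp (inv x)) (grp_mulVg grp) (grp_mul1g grp) (grp_mulVg grp).
Qed.

Lemma mulg1 x : mul x one = x.
Proof. by rewrite -(grp_mulVg grp x) (grp_assoc grp) mulgV (grp_mul1g grp). Qed.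

Lemma mulKVg x y : mul x (mul (inv x) y) = y.
Proof. by rewrite (grp_assoc grp) mulgV (grp_mul1g grp). Qed.

Lemma mulgK x y : mul (mul x y) (inv y) = x.
Proof. by rewrite -(grp_assoc grp) mulgV mulg1. Qed.

Lemma invK x : inv (inv x) = x.
Proof.
rewrite -[inv (inv x)]mulg1 -(grp_mulVg grp x) (grp_assoc grp).
by rewrite !(grp_mulVg grp) (grp_mul1g grp).
Qed.

Lemma ldiv_telescope x y z : mul (mul (inv x) y) (mul (inv y) z) = mul (inv x) z.
Proof. by rewrite -(grp_assoc grp) mulKVg. Qed.

Lemma ldiv_injl x x' y : mul (inv x) y = mul (inv x') y -> x = x'.
Proof. by move=> /(congr1 (fun z => inv (mul z (inv y)))); rewrite !mulgK !invK. Qed.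

End Groups.

Section Arrow.
Variables (K L : Type) (lt : L -> L -> Prop) (HL : @IsLambda K L lt).
Variables (G : Type) (mul : G -> G -> G) (one : G) (inv : G -> G).
Hypotheses (grp : IsGroup mul one inv) (cardG : card_eq G L).
Variable c : G -> K.

Let wo : IsWellOrder lt := proj1 HL.
Local Notation ldiv x y := (mul (inv x) y).

Lemma seg_small a : small K (fun b => lt b a).
Proof. by case: HL => _ [_ [_]]; apply. Qed.

Lemma group_not_small : ~ small K (fun _ : G => True).
Proof.
case: HL => _ [infL [bigL _]]; case: cardG => [f [g [gf fg]]].
have le_LG : card_le {x : L | True} {x : G | True}.
  exists (fun u => exist (fun _ => True) (g (proj1_sig u)) I).
  by move=> u v /(congr1 (fun w => f (proj1_sig w))) /=; rewrite !fg => /proj1_sig_inj.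
move=> /(small_le le_LG) [fin|le].
- exact: infL (finite_le (card_le_sig_true L) fin).
- exact: bigL (card_le_trans (card_le_sig_true L) le).
Qed.

(* The consecutive quotients of a block become terms of the sequence; their adjacent
   products telescope to quotients h m^-1 h m' of colour i. *)
Definition block (i : K) (U : G -> Prop) (h : nat -> G) : Prop :=
  [/\ forall m m', m < m' -> c (ldiv (h m) (h m')) = i,
      inj (fun m => ldiv (h m) (h (S m))) &
      forall m, ~ U (ldiv (h m) (h (S m)))].

Lemma block_subset i U V h : block i U h -> (forall x, V x -> U x) -> block i V h.
Proof. by move=> [hi hinj hU] VU; split=> // m /VU; apply: hU. Qed.

(* Choosing y b outside forbidden U {y p | p < b} keeps the quotients y a^-1 y b (a < b)
   pairwise distinct and outside U. *)
Definition forbidden (U V : G -> Prop) (x : G) : Prop :=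
  (exists u v w, V u /\ V v /\ V w /\ x = mul u (ldiv v w)) \/
  (exists u z, V u /\ U z /\ x = mul u z).

Lemma forbidden_small U V : small K U -> small K V -> small K (forbidden U V).
Proof.
move=> sU sV; apply: small_union.
- pose f (t : G * (G * G)) := mul t.1 (ldiv t.2.1 t.2.2).
  apply: small_subset (small_image f (small_prod sV (small_prod sV sV))).
  by move=> x [u [v [w [Vu [Vv [Vw ->]]]]]]; exists (u, (v, w)).
- apply: small_subset (small_image (fun t : G * G => mul t.1 t.2) (small_prod sV sU)).
  by move=> x [u [z [Vu [Uz ->]]]]; exists (u, z).
Qed.

Lemma exists_avoiding_seq U : small K U ->
  exists y : L -> G, forall b, ~ forbidden U (fun z => exists p, lt p b /\ y p = z) (y b).
Proof.
move=> sU.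
pose avoid (_ : L) (prev : L -> G -> Prop) x := ~ forbidden U (fun z => exists p, prev p z) x.
have [y yP] := wf_rec_choice (wo_wf wo) one avoid.
exists y => b; apply: (yP b); apply: contrapT => /forallNP allforb; apply: group_not_small.
pose earlier z := exists p, lt p b /\ y p = z.
apply: small_subset (forbidden_small (V := earlier) sU _) => [x _|].
  by apply: contrapT => nx; apply: (allforb x).
apply: small_subset (small_image y (seg_small b)) => x [p [pb <-]].
by exists p.
Qed.

Lemma exists_free_seq U : small K U -> exists y : L -> G,
  (forall a b, lt a b -> ~ U (ldiv (y a) (y b))) /\
  (forall a b a' b', lt a b -> lt a' b' ->
     ldiv (y a) (y b) = ldiv (y a') (y b') -> a = a' /\ b = b').
Proof.
move=> /exists_avoiding_seq [y fresh].
have y_inj a b : lt a b -> y a <> y b.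
  move=> ab eab; apply: (fresh b); left; exists (y a), (y a), (y a).
  by rewrite (mulKVg grp) -eab; do !split; exists a.
exists y; split=> [a b ab Uab|a b a' b' ab a'b' e].
  apply: (fresh b); right; exists (y a), (ldiv (y a) (y b)).
  by rewrite (mulKVg grp); split=> //; exists a.
have later a0 b0 a1 b1 : lt a0 b0 -> lt a1 b1 -> lt b0 b1 ->
    ldiv (y a0) (y b0) = ldiv (y a1) (y b1) -> False.
  move=> ab0 ab1 b01 e01; apply: (fresh b1); left; exists (y a1), (y a0), (y b0).
  rewrite e01 (mulKVg grp); split; first by exists a1.
  by split; [exists a0; split=> //; apply: (lt_trans wo ab0 b01) | split; [exists b0|]].
case: (wo_total wo b b') => [bb'|[ebb'|b'b]].
- by case: (later _ _ _ _ ab a'b' bb' e).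
- subst b'; split=> //; have eaa' := ldiv_injl grp e.
  by case: (wo_total wo a a') => [/y_inj|[|/y_inj/(_ (esym eaa'))]].
- by case: (later _ _ _ _ a'b' ab b'b (esym e)).
Qed.

Lemma exists_block U : small K U -> exists i h, block i U h.
Proof.
move=> /exists_free_seq [y [free sidon]]; have [_ [infL [bigL _]]] := HL.
have [j [e home]] := partition_omega wo (fun a b => c (ldiv (y a) (y b))) infL bigL.
have eup n m : n < m -> lt (e n) (e m) by move=> /home [].
have step m : lt (e m) (e (S m)) by apply: eup; lia.
exists j, (fun n => y (e n)); split=> [m m' /home [] //|m m' emm'|m].
- by have [/(increasing_inj wo eup) -> _] := sidon _ _ _ _ (step m) (step m') emm'.
- exact: free (step m).
Qed.

Lemma block_colour : exists i, forall U, small K U -> exists h, block i U h.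
Proof.
apply: contrapT => /forallNP noi.
have /choice [U Ui] : forall i, exists U, small K U /\ forall h, ~ block i U h.
  move=> i; apply: contrapT => /forallNP allU; apply: (noi i) => U sU.
  by apply: contrapT => /forallNP noh; apply: (allU U); split.
have [i [h bh]] := exists_block (small_bigunion (fun i => (Ui i).1)).
by apply: ((Ui i).2 h); apply: (block_subset bh) => x Uix; exists i.
Qed.

Section Assembly.
Variables (i : K) (d : L -> L) (n : L -> nat).
Hypothesis dnP : forall a, no_pred lt (d a) /\ nth_succ lt (d a) (n a) a.
Variable blk : L -> nat -> G.
Let g a := ldiv (blk (d a) (n a)) (blk (d a) (S (n a))).
Hypothesis blkP : forall w, block i (fun x => exists a, lt a w /\ x = g a) (blk w).

Lemma assembly_inj : inj g.
Proof.
move=> a b gab; have [nda dna] := dnP a; have [ndb dnb] := dnP b.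
case: (wo_total wo (d a) (d b)) => [dadb|[edd|dbda]].
- have [_ _ avoid] := blkP (d b).
  by case: (avoid (n b)); exists a; split; [exact: nth_succ_below dna dadb ndb | rewrite gab].
- have [_ inj_b _] := blkP (d a).
  have enn : n a = n b by apply: inj_b; move: gab; rewrite /g edd.
  by apply: (nth_succ_fun wo dna); rewrite edd enn.
- have [_ _ avoid] := blkP (d a).
  by case: (avoid (n a)); exists b; split; [exact: nth_succ_below dnb dbda nda | rewrite -gab].
Qed.

Lemma assembly_AFP a k x :
  AFP lt mul g a k x -> x = ldiv (blk (d a) (n a)) (blk (d a) (n a + k + 1)).
Proof.
elim=> [a0|a0 b0 m x0 succ _ ->]; first by rewrite /g Nat.add_0_r Nat.add_1_r.
have [nda dna] := dnP a0; have [ndb dnb] := dnP b0.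
have [<- <-] := nth_succ_uniq wo nda ndb (nth_succS dna succ) dnb.
by rewrite /g (ldiv_telescope grp); congr (mul _ (blk _ _)); lia.
Qed.

End Assembly.

Lemma exists_blocks i (d : L -> L) (n : L -> nat) :
  (forall U, small K U -> exists h, block i U h) -> (forall a, d a = a \/ lt (d a) a) ->
  exists blk : L -> nat -> G, forall w,
    block i (fun x => exists a, lt a w /\ x = ldiv (blk (d a) (n a)) (blk (d a) (S (n a)))) (blk w).
Proof.
move=> blocks dle.
pose avoid (w : L) (prev : L -> (nat -> G) -> Prop) :=
  block i (fun x => exists a h, lt a w /\ prev (d a) h /\ x = ldiv (h (n a)) (h (S (n a)))).
have [blk blkP] := wf_rec_choice (wo_wf wo) (fun _ => one) avoid.
exists blk => w; pose f a := ldiv (blk (d a) (n a)) (blk (d a) (S (n a))).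
have sub x :
    (exists a h, lt a w /\ graph_below lt blk w (d a) h /\ x = ldiv (h (n a)) (h (S (n a)))) ->
    exists a, lt a w /\ x = f a.
  by move=> [a [h [aw [[_ <-] ->]]]]; exists a.
have [h bh] := blocks _ (small_subset sub (small_image f (seg_small w))).
apply: (block_subset (blkP w (ex_intro _ h bh))) => x [a [aw ->]].
exists a, (blk (d a)); split=> //; split=> //; split=> //.
by case: (dle a) => [->|da] //; apply: (lt_trans wo da aw).
Qed.

Lemma arrow_lambda :
  exists g : L -> G, inj g /\ exists i, forall a n x, AFP lt mul g a n x -> c x = i.
Proof.
have [i blocks] := block_colour.
have /choice [dn dnP] : forall a, exists p : L * nat, no_pred lt p.1 /\ nth_succ lt p.1 p.2 a.
  by move=> a; have [d [n dna]] := nth_succ_exists wo a; exists (d, n).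
pose d a := (dn a).1; pose n a := (dn a).2.
have {}dnP : forall a, no_pred lt (d a) /\ nth_succ lt (d a) (n a) a := dnP.
have [blk blkP] := exists_blocks n blocks (fun a => nth_succ_le wo (dnP a).2).
exists (fun a => ldiv (blk (d a) (n a)) (blk (d a) (S (n a)))).
split; first exact: (assembly_inj dnP blkP).
exists i => a k x /(assembly_AFP dnP) ->.
by have [ci _ _] := blkP (d a); apply: ci; lia.
Qed.

End Arrow.

(** * Existence of lambda *)

Lemma seg_well_order {L} (lt : L -> L -> Prop) (w : L) :
  IsWellOrder lt -> IsWellOrder (fun u v : seg lt w => lt (proj1_sig u) (proj1_sig v)).
Proof.
move=> wo; split.
- by move=> u; apply: (lt_irrefl wo).
- by move=> u v z; apply: (lt_trans wo).
- move=> u v; case: (wo_total wo (proj1_sig u) (proj1_sig v)) => [|[/proj1_sig_inj|]].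
  + by left.
  + by right; left.
  + by right; right.
- exact: (wf_inverse_image _ _ _ _ (wo_wf wo)).
Qed.

(* A well-order of nat * 2^(2^K) with a top element adjoined has a segment that is
   infinite and larger than 2^K; the least such segment is lambda. *)
Lemma exists_lambda K : exists (L : Type) (lt : L -> L -> Prop), @IsLambda K L lt.
Proof.
pose X := (nat * ((K -> bool) -> bool))%type.
have [ltX woX] := exists_well_order X.
pose lt := lt_top ltX; have wo : IsWellOrder lt := lt_top_wo woX.
pose big z := infinite (fun v => lt v z) /\ ~ card_le (seg lt z) (K -> bool).
have [|w [[infw bigw] minw]] := wo_min wo (P := big).
  have [le_X _] := card_le_seg_top ltX; exists None; split.
  - move=> fin; apply: nat_infinite (finite_le (card_le_trans _ le_X) fin).
    by exists (fun n => (n, fun _ => true)) => m n [].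
  - move=> le; apply: (@cantor (K -> bool)); apply: card_le_trans le.
    by apply: card_le_trans le_X; exists (fun p => (0, p)) => p q [].
exists (seg lt w), (fun u v => lt (proj1_sig u) (proj1_sig v)).
split; [exact: seg_well_order | split; [exact: infw | split; [exact: bigw|]]] => a.
have le_a : card_le {b : seg lt w | lt (proj1_sig b) (proj1_sig a)} (seg lt (proj1_sig a)).
  exists (fun b => exist (fun v => lt v (proj1_sig a)) (proj1_sig (proj1_sig b)) (proj2_sig b)).
  move=> [[b bw] ba] [[b' b'w] b'a] /(congr1 (@proj1_sig _ _)) /= ebb'.
  by do 2!apply: proj1_sig_inj.
have nbig : ~ big (proj1_sig a).
  move=> /minw [ea|wa]; first by move: (proj2_sig a); rewrite -ea => /(lt_irrefl wo).
  exact: (lt_asym wo wa (proj2_sig a)).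
case: (EM (finite_type (seg lt (proj1_sig a)))) => [fin|inf].
  by left; apply: finite_le le_a fin.
right; apply: card_le_trans le_a _; apply: contrapT => nle; exact: nbig (conj inf nle).
Qed.

Theorem mainTheorem2 :
  forall K : Type,
    (exists (L : Type) (lt : L -> L -> Prop), @IsLambda K L lt) /\
    (forall (L : Type) (lt : L -> L -> Prop), @IsLambda K L lt -> @ArrowAFP K L lt).
Proof.
move=> K; split; first exact: exists_lambda.
by move=> L lt HL G mul one inv grp cardG c; exact: (arrow_lambda HL grp cardG c).
Qed.
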